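(* Let $\mathcal{H}$ be a complex Hilbert space of finite dimension $n\geq 2$, $m\geq 2$, and let $\rho$ be a density operator on $\mathcal{H}^{\otimes m}$. If $\rho$ is in symmetric state consensus (SSC), then $\rho$ is in reduced state consensus (RSC); and if $\rho$ is in RSC, then $\rho$ is in $\sigma$-expectation consensus ($\sigma$EC) for every operator $\sigma$ on $\mathcal{H}$. The converse implications do not hold in general: there exist (e.g. for $m=3$, $n=2$, $\sigma=\mathrm{diag}(1,-1)$) states that are RSC but not SSC, and states that are $\sigma$EC but not RSC.
   Context: For $X$ an operator on $\mathcal{H}$, $X^{(i)}=I^{\otimes(i-1)}\otimes X\otimes I^{\otimes(m-i)}$. For a permutation $\pi$ of $\{1,\dots,m\}$, $U_\pi$ is the unitary on $\mathcal{H}^{\otimes m}$ with $U_\pi(X_1\otimes\cdots\otimes X_m)U_\pi^\dagger=X_{\pi(1)}\otimes\cdots\otimes X_{\pi(m)}$ for all operators $X_i$. Definitions: $\rho$ is $\sigma$EC if $\mathrm{Tr}(\sigma^{(1)}\rho)=\cdots=\mathrm{Tr}(\sigma^{(m)}\rho)$; $\rho$ is RSC if the reduced states $\bar\rho_k=\mathrm{Tr}_{\bigotimes_{j\neq k}\mathcal{H}_j}(\rho)$ (partial trace over all factors except the $k$-th) satisfy $\bar\rho_1=\cdots=\bar\rho_m$; $\rho$ is SSC if $U_\pi\rho U_\pi^\dagger=\rho$ for every permutation $\pi$. *)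

From HB Require Import structures.
From mathcomp Require Import all_boot all_order all_algebra.
From mathcomp Require Import fingroup perm.
From mathcomp Require Import sesquilinear spectral.
Set Implicit Arguments. Unset Strict Implicit. Unset Printing Implicit Defensive.
Import GRing.Theory Num.Theory.
Local Open Scope ring_scope.
Local Open Scope sesquilinear_scope.

(* Complex scalars: an arbitrary numClosedFieldType C (e.g. the complex
   numbers); H = C^n with standard basis indexed by 'I_n. *)

(* Basis labels of H^{(x)m}: functions s : 'I_m -> 'I_n, i.e. e_{s 0} (x) ... (x) e_{s (m-1)}. *)
Definition tidx (m n : nat) := {ffun 'I_m -> 'I_n}.
Notation tdim m n := #|{: tidx m n}|.

Section Tensor.
Variable C : numClosedFieldType.
Variables m n : nat.

Definition lab (a : 'I_(tdim m n)) : tidx m n := enum_val a.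

Definition tentry (A : 'M[C]_(tdim m n)) (s t : tidx m n) : C :=
  A (enum_rank s) (enum_rank t).

Definition tensor (X : 'I_m -> 'M[C]_n) : 'M[C]_(tdim m n) :=
  \matrix_(a, b) \prod_(i < m) X i (lab a i) (lab b i).

Definition embed (i : 'I_m) (X : 'M[C]_n) : 'M[C]_(tdim m n) :=
  tensor (fun j => if j == i then X else 1%:M).

(* U_pi : e_s |-> e_{s o pi^-1}; it satisfies
   U_pi (X_1 (x) .. (x) X_m) U_pi^* = X_{pi 1} (x) .. (x) X_{pi m}. *)
Definition permU (pi : 'S_m) : 'M[C]_(tdim m n) :=
  \matrix_(a, b) (lab b == [ffun j => lab a ((pi^-1)%g j)])%:R.

(* reduced state on the k-th factor: partial trace over all other factors *)
Definition reduced (rho : 'M[C]_(tdim m n)) (k : 'I_m) : 'M[C]_n :=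
  \matrix_(x, y) \sum_(s : tidx m n | s k == x) \sum_(t : tidx m n |
      (t k == y) && [forall j, (j != k) ==> (s j == t j)]) tentry rho s t.

Definition density (rho : 'M[C]_(tdim m n)) : Prop :=
  [/\ rho ^t* = rho,
      (forall v : 'rV[C]_(tdim m n), 0 <= (v *m rho *m v ^t*) 0 0)
    & \tr rho = 1].

Definition sigmaEC (sigma : 'M[C]_n) (rho : 'M[C]_(tdim m n)) : Prop :=
  forall i j : 'I_m, \tr (embed i sigma *m rho) = \tr (embed j sigma *m rho).

Definition RSC (rho : 'M[C]_(tdim m n)) : Prop :=
  forall k l : 'I_m, reduced rho k = reduced rho l.

Definition SSC (rho : 'M[C]_(tdim m n)) : Prop :=
  forall pi : 'S_m, permU pi *m rho *m (permU pi) ^t* = rho.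

End Tensor.

Definition pauliZ (C : numClosedFieldType) : 'M[C]_2 :=
  \matrix_(i, j) (if i == j then (if i == 0 then 1 else -1) else 0).

From HB Require Import structures.
From mathcomp Require Import all_boot all_order all_algebra.
From mathcomp Require Import fingroup perm.
From mathcomp Require Import sesquilinear spectral ring.
Set Implicit Arguments. Unset Strict Implicit. Unset Printing Implicit Defensive.
Import GRing.Theory Num.Theory.
Local Open Scope ring_scope.
Local Open Scope sesquilinear_scope.

(* Conjugating by U_pi relabels the basis, and the transposition (k l) turns
   the sum defining the k-th reduced state into the one defining the l-th, so
   SSC implies RSC.  Tr(sigma^(i) rho) = Tr(sigma rhobar_i) only depends on the
   i-th reduced state, so RSC implies sigmaEC.  Neither implication needs rho
   to be a density operator.

   Counterexamples on three qubits: the equal mixture of |100> and |011> has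
   every reduced state equal to I/2 but is not invariant under swapping the
   first two factors; the pure state |+> (x) (|00> + |11>)/sqrt 2 is invariant
   under flipping every qubit, which negates each Z^(i), so all Z-expectations
   vanish, while its first reduced state |+><+| is not the second one, I/2. *)

Section TensorFacts.
Variable C : numClosedFieldType.
Variables m n : nat.
Local Notation T := (tidx m n).
Local Notation N := (tdim m n).
Local Notation M := ('M[C]_(tdim m n)).
Local Notation lab := (@lab m n).

Lemma lab_rank s : lab (enum_rank s) = s.
Proof. by rewrite /lab enum_rankK. Qed.

Lemma eq_lab a b : (lab a == lab b) = (a == b).
Proof. by apply/eqP/eqP => [/enum_val_inj|->]. Qed.

Lemma sum_lab (F : T -> C) : \sum_(a < N) F (lab a) = \sum_s F s.
Proof.
rewrite (reindex (@enum_rank _)) /=; first by apply: eq_bigr => s _; rewrite lab_rank.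
by exists enum_val => x _; rewrite ?enum_rankK ?enum_valK.
Qed.

Lemma tentry_lab (A : M) a b : A a b = tentry A (lab a) (lab b).
Proof. by rewrite /tentry /lab !enum_valK. Qed.

Lemma sum_delta (X : T) (g : T -> C) : \sum_s (s == X)%:R * g s = g X.
Proof.
rewrite (bigD1 X) //= eqxx mul1r big1 ?addr0 // => s /negbTE ->.
by rewrite mul0r.
Qed.

Lemma sum_delta_pred (X : T) (P : pred T) :
  \sum_(s | P s) ((s == X)%:R : C) = (P X)%:R.
Proof.
rewrite big_mkcond -(sum_delta X (fun s => (P s)%:R)).
by apply: eq_bigr => s _; case: (P s); rewrite ?mulr1 ?mulr0.
Qed.

Definition relabel (pi : 'S_m) (s : T) : T := [ffun j => s ((pi^-1)%g j)].

Lemma relabel_inj pi : injective (relabel pi).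
Proof.
move=> s t /ffunP st; apply/ffunP => j.
by have := st (pi j); rewrite !ffunE permK.
Qed.

Lemma tentry_permU_conj pi (rho : M) s t :
  tentry (permU C n pi *m rho *m (permU C n pi)^t*) s t
  = tentry rho (relabel pi s) (relabel pi t).
Proof.
rewrite {1}/tentry mxE.
under eq_bigr do rewrite !mxE mulr_suml.
rewrite exchange_big /=.
transitivity (\sum_(b < N) (lab b == relabel pi s)%:R *
    \sum_(a < N) tentry rho (lab b) (lab a) * (lab a == relabel pi t)%:R).
  apply: eq_bigr => b _; rewrite mulr_sumr; apply: eq_bigr => a _.
  by rewrite !mxE !lab_rank conjC_nat -tentry_lab mulrA.
rewrite (sum_lab (fun s' => (s' == relabel pi s)%:R *
    \sum_(a < N) tentry rho s' (lab a) * (lab a == relabel pi t)%:R)) sum_delta.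
rewrite (sum_lab (fun t' => tentry rho (relabel pi s) t' * (t' == relabel pi t)%:R)).
by under eq_bigr do rewrite mulrC; rewrite sum_delta.
Qed.

Lemma SSC_tentry (rho : M) : SSC rho ->
  forall pi s t, tentry rho (relabel pi s) (relabel pi t) = tentry rho s t.
Proof. by move=> rhoS pi s t; rewrite -tentry_permU_conj rhoS. Qed.

Definition upd (s : T) (k : 'I_m) (y : 'I_n) : T :=
  [ffun j => if j == k then y else s j].

Lemma eq_upd (s : T) k y : (s == upd s k y) = (s k == y).
Proof.
apply/eqP/eqP => [E|<-]; first by rewrite {1}E ffunE eqxx.
by apply/ffunP => j; rewrite ffunE; case: eqP => // ->.
Qed.

Lemma sum_off_agree (F : T -> C) (s : T) (k : 'I_m) (y : 'I_n) :
  \sum_(t : T | (t k == y) && [forall j, (j != k) ==> (s j == t j)]) F t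
  = F (upd s k y).
Proof.
apply: big_pred1 => t /=; apply/andP/eqP => [[/eqP tk /forallP st]|->].
  apply/ffunP => j; rewrite ffunE; case: eqP => [->|/eqP jk] //.
  by rewrite (eqP (implyP (st j) jk)).
rewrite ffunE !eqxx; split => //; apply/forallP => j; apply/implyP => jk.
by rewrite ffunE (negbTE jk).
Qed.

Lemma reducedE (rho : M) k x y :
  reduced rho k x y = \sum_(s : T | s k == x) tentry rho s (upd s k y).
Proof. by rewrite /reduced mxE; apply: eq_bigr => s _; rewrite sum_off_agree. Qed.

Lemma tr_reduced (rho : M) k : \tr (reduced rho k) = \tr rho.
Proof.
rewrite /mxtrace.
transitivity (\sum_x \sum_(s : T | s k == x) tentry rho s s).
  apply: eq_bigr => x _; rewrite reducedE; apply: eq_bigr => s sk.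
  by rewrite -(eqP (etrans (eq_upd s k x) sk)).
under [RHS]eq_bigr do rewrite tentry_lab.
by rewrite (sum_lab (fun s => tentry rho s s)) [RHS](partition_big (fun s : T => s k) predT).
Qed.

Lemma SSC_RSC (rho : M) : SSC rho -> RSC rho.
Proof.
move=> rhoS k l; apply/matrixP => x y; rewrite !reducedE.
pose tau := tperm k l.
rewrite (reindex_inj (@relabel_inj tau)) /=.
apply: eq_big => [s|s _]; first by rewrite ffunE tpermV tpermL.
have -> : upd (relabel tau s) k y = relabel tau (upd s l y).
  apply/ffunP => j; rewrite !ffunE tpermV.
  have [->|jk] := eqVneq j k; first by rewrite tpermL eqxx.
  case: (eqVneq (tau j) l) => [E|] //.
  by move: jk; rewrite -(tpermK k l j) -/tau E tpermR eqxx.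
by rewrite SSC_tentry.
Qed.

Definition agree_off (k : 'I_m) (s t : T) := [forall j, (j != k) ==> (s j == t j)].

Lemma embed_prodE (i : 'I_m) (sigma : 'M[C]_n) (s t : T) :
  \prod_(j < m) (if j == i then sigma else 1%:M) (t j) (s j)
  = sigma (t i) (s i) * (agree_off i s t)%:R.
Proof.
rewrite (bigD1 i) //= eqxx; congr (_ * _).
rewrite (eq_bigr (fun j => (t j == s j)%:R)); last first.
  by move=> j /negbTE ji; rewrite ji mxE.
rewrite /agree_off; case: forallP => [st|st].
  by apply: big1 => j ji; rewrite (eqP (implyP (st j) ji)) eqxx.
have [j] : exists j, ~~ ((j != i) ==> (s j == t j)).
  by apply/existsP; rewrite -negb_forall; apply/forallP.
rewrite negb_imply => /andP[ji sj].
by rewrite (bigD1 j ji) /= eq_sym (negbTE sj) mul0r.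
Qed.

Lemma sum_agree_off (g : T -> C) (s : T) (i : 'I_m) :
  \sum_t g t * (agree_off i s t)%:R = \sum_y g (upd s i y).
Proof.
transitivity (\sum_(t | agree_off i s t) g t).
  rewrite [RHS]big_mkcond; apply: eq_bigr => t _.
  by case: agree_off; rewrite ?mulr1 ?mulr0.
rewrite (partition_big (fun t : T => t i) predT) //=.
apply: eq_bigr => y _; rewrite -sum_off_agree; apply: eq_bigl => t.
by rewrite andbC.
Qed.

Lemma tr_embed_mul (i : 'I_m) (sigma : 'M[C]_n) (rho : M) :
  \tr (embed i sigma *m rho) = \sum_x \sum_y sigma y x * reduced rho i x y.
Proof.
rewrite mxtrace_mulC /mxtrace.
transitivity (\sum_s \sum_t
    tentry rho s t * (sigma (t i) (s i) * (agree_off i s t)%:R)).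
  rewrite -sum_lab; apply: eq_bigr => a _; rewrite mxE -sum_lab.
  by apply: eq_bigr => b _; rewrite tentry_lab mxE embed_prodE.
transitivity (\sum_s \sum_y tentry rho s (upd s i y) * sigma y (s i)).
  apply: eq_bigr => s _; under eq_bigr do rewrite mulrA.
  by rewrite sum_agree_off; apply: eq_bigr => y _; rewrite ffunE eqxx.
rewrite (partition_big (fun s : T => s i) predT) //=.
apply: eq_bigr => x _; rewrite exchange_big /=.
apply: eq_bigr => y _; rewrite reducedE mulr_sumr.
by apply: eq_bigr => s /eqP <-; rewrite mulrC.
Qed.

Lemma RSC_sigmaEC (rho : M) : RSC rho -> forall sigma, sigmaEC sigma rho.
Proof. by move=> rhoR sigma i j; rewrite !tr_embed_mul (rhoR i j). Qed.

Definition tmatrix (f : T -> T -> C) : M := \matrix_(a, b) f (lab a) (lab b).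

Lemma tentry_tmatrix f s t : tentry (tmatrix f) s t = f s t.
Proof. by rewrite /tentry mxE !lab_rank. Qed.

Lemma density_diag (w : T -> C) :
  (forall s, 0 <= w s) -> \sum_s w s = 1 ->
  density (tmatrix (fun s t => (s == t)%:R * w s)).
Proof.
move=> w_ge0 w_sum1; split.
- apply/matrixP => a b; rewrite !mxE rmorphM /= conjC_nat.
  rewrite (CrealP (ger0_real (w_ge0 _))) eq_sym !eq_lab.
  by case: eqVneq => [->|]; rewrite ?mul0r ?mul1r.
- move=> v; rewrite mxE; apply: sumr_ge0 => b _; rewrite !mxE.
  rewrite (bigD1 b) //= big1 ?addr0; last first.
    by move=> a ab; rewrite mxE eq_lab (negbTE ab) mul0r mulr0.
  rewrite mxE eqxx mul1r -mulrA mulrCA; apply: mulr_ge0 => //.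
  exact: mul_conjC_ge0.
- apply: etrans w_sum1; rewrite /mxtrace -sum_lab; apply: eq_bigr => a _.
  by rewrite mxE eqxx mul1r.
Qed.

Definition sqnorm (u : T -> C) : C := \sum_s u s * (u s)^*.

Lemma density_pure (u : T -> C) : sqnorm u != 0 ->
  density (tmatrix (fun s t => (sqnorm u)^-1 * (u s * (u t)^*))).
Proof.
set c := sqnorm u => c_neq0.
have c_ge0 : 0 <= c by apply: sumr_ge0 => s _; apply: mul_conjC_ge0.
have c_real : c^* = c := CrealP (ger0_real c_ge0).
split.
- apply/matrixP => a b; rewrite !mxE !rmorphM fmorphV /= c_real conjCK.
  by rewrite [_ * u _]mulrC.
- move=> v; rewrite mxE.
  have -> : \sum_j (v *m tmatrix (fun s t => c^-1 * (u s * (u t)^*))) 0 j *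
      (v ^t*) j 0 = c^-1 * ((\sum_a v 0 a * u (lab a)) *
        (\sum_a v 0 a * u (lab a))^*).
    rewrite rmorph_sum !mulr_sumr; apply: eq_bigr => b _.
    rewrite !mxE !mulr_suml mulr_sumr; apply: eq_bigr => a _.
    rewrite !mxE rmorphM; ring.
  by apply: mulr_ge0; rewrite ?invr_ge0 // mul_conjC_ge0.
- rewrite /mxtrace; under eq_bigr do rewrite mxE.
  by rewrite (sum_lab (fun s => c^-1 * (u s * (u s)^*))) -mulr_sumr mulVf.
Qed.

Lemma reduced_diag (w : T -> C) k x y :
  reduced (tmatrix (fun s t => (s == t)%:R * w s)) k x y
  = (x == y)%:R * \sum_(s : T | s k == x) w s.
Proof.
rewrite reducedE mulr_sumr; apply: eq_bigr => s /eqP sk.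
by rewrite tentry_tmatrix eq_upd sk.
Qed.

End TensorFacts.

Arguments sum_delta_pred {C m n}.

Section ThreeQubits.
Variable C : numClosedFieldType.
Local Notation T := (tidx 3 2).
Local Notation M := ('M[C]_(tdim 3 2)).

Let q0 : 'I_3 := @Ordinal 3 0 isT.
Let q1 : 'I_3 := @Ordinal 3 1 isT.
Let q2 : 'I_3 := @Ordinal 3 2 isT.
Let b0 : 'I_2 := @Ordinal 2 0 isT.
Let b1 : 'I_2 := @Ordinal 2 1 isT.

Lemma ord2P (x : 'I_2) : x = b0 \/ x = b1.
Proof. by case: x => [[|[|k]] Hk]; [left|right|]; try apply: val_inj. Qed.

Lemma two_neq0 : (2 : C) != 0.
Proof. by rewrite pnatr_eq0. Qed.

(** ** A state in RSC but not in SSC *)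

Definition ket100 : T := [ffun j => if j == q0 then b1 else b0].
Definition ket011 : T := [ffun j => if j == q0 then b0 else b1].

Definition mix_weight (s : T) : C := 2^-1 * ((s == ket100)%:R + (s == ket011)%:R).
Definition mix_state : M := tmatrix (fun s t => (s == t)%:R * mix_weight s).

Lemma density_mix_state : density mix_state.
Proof.
apply: density_diag => [s|].
  by apply: mulr_ge0; rewrite ?invr_ge0 ?addr_ge0 ?ler0n.
rewrite -mulr_sumr big_split /= (sum_delta_pred ket100 xpredT).
by rewrite (sum_delta_pred ket011 xpredT) mulVf // two_neq0.
Qed.

Lemma mix_state_RSC : RSC mix_state.
Proof.
have marginal k x : \sum_(s : T | s k == x) mix_weight s = 2^-1.
  rewrite -mulr_sumr big_split /= (sum_delta_pred ket100 (fun s : T => s k == x)).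
  rewrite (sum_delta_pred ket011 (fun s : T => s k == x)) !ffunE.
  by case: (k == q0); case: (ord2P x) => ->; rewrite /= ?add0r ?addr0 ?mulr1.
by move=> k l; apply/matrixP => x y; rewrite !reduced_diag !marginal.
Qed.

Lemma mix_state_not_SSC : ~ SSC mix_state.
Proof.
move=> /SSC_tentry /(_ (tperm q0 q1) ket100 ket100).
rewrite !tentry_tmatrix eqxx !mul1r /mix_weight.
have -> : (relabel (tperm q0 q1) ket100 == ket100) = false.
  by apply/negbTE/eqP => /ffunP /(_ q0); rewrite !ffunE tpermV tpermL.
have -> : (relabel (tperm q0 q1) ket100 == ket011) = false.
  by apply/negbTE/eqP => /ffunP /(_ q2); rewrite !ffunE tpermV tpermD.
have -> : (ket100 == ket011) = false.
  by apply/negbTE/eqP => /ffunP /(_ q0); rewrite !ffunE.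
rewrite eqxx /= !addr0 mul1r mulr0 mulr1 => /esym/eqP.
by rewrite invr_eq0 (negbTE two_neq0).
Qed.

(** ** A state in Z-expectation consensus but not in RSC *)

(* Unnormalised amplitudes of |+> (x) (|00> + |11>). *)
Definition plus_bell_amp (s : T) : C := (s q1 == s q2)%:R.
Definition plus_bell : M := tmatrix (fun s t =>
  (sqnorm plus_bell_amp)^-1 * (plus_bell_amp s * (plus_bell_amp t)^*)).

Lemma sqnorm_plus_bell_neq0 : sqnorm plus_bell_amp != 0.
Proof.
rewrite /sqnorm (bigD1 [ffun _ => b0]) //= paddr_eq0; last 2 first.
- exact: mul_conjC_ge0.
- by apply: sumr_ge0 => s _; exact: mul_conjC_ge0.
by rewrite /plus_bell_amp !ffunE eqxx /= conjC1 mulr1 oner_eq0.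
Qed.

Lemma density_plus_bell : density plus_bell.
Proof. exact/density_pure/sqnorm_plus_bell_neq0. Qed.

Lemma tentry_plus_bell s t : tentry plus_bell s t =
  (sqnorm plus_bell_amp)^-1 * (plus_bell_amp s * plus_bell_amp t).
Proof. by rewrite tentry_tmatrix /plus_bell_amp conjC_nat. Qed.

Definition flip (x : 'I_2) : 'I_2 := if x == b0 then b1 else b0.

Lemma flipK : involutive flip.
Proof. by move=> x; case: (ord2P x) => ->. Qed.

Lemma flip_eq x y : (flip x == y) = (x == flip y).
Proof. by case: (ord2P x) => ->; case: (ord2P y) => ->. Qed.

Definition flip_all (s : T) : T := [ffun j => flip (s j)].

Lemma flip_all_inj : injective flip_all.
Proof.
move=> s t /ffunP st; apply/ffunP => j.
by have := st j; rewrite !ffunE => /(can_inj flipK).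
Qed.

Lemma reduced_plus_bell_flip i x y :
  reduced plus_bell i (flip x) (flip y) = reduced plus_bell i x y.
Proof.
rewrite !reducedE (reindex_inj flip_all_inj) /=.
apply: eq_big => [s|s _]; first by rewrite ffunE flip_eq flipK.
have -> : upd (flip_all s) i (flip y) = flip_all (upd s i y).
  by apply/ffunP => j; rewrite !ffunE; case: (j == i).
by rewrite !tentry_plus_bell /plus_bell_amp !ffunE !(inj_eq (can_inj flipK)).
Qed.

Lemma pauliZ_flip x y : pauliZ C (flip y) (flip x) = - pauliZ C y x.
Proof.
by rewrite !mxE; case: (ord2P x) => ->; case: (ord2P y) => ->; rewrite /= ?oppr0 ?opprK.
Qed.

Lemma tr_pauliZ_plus_bell i : \tr (embed i (pauliZ C) *m plus_bell) = 0.
Proof.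
rewrite tr_embed_mul; set S := (X in X = 0).
have S_opp : S = - S.
  rewrite {1}/S (reindex_inj (can_inj flipK)) /= -sumrN.
  apply: eq_bigr => x _; rewrite (reindex_inj (can_inj flipK)) /= -sumrN.
  by apply: eq_bigr => y _; rewrite reduced_plus_bell_flip pauliZ_flip mulNr.
have : S *+ 2 == 0 by rewrite mulr2n {2}S_opp subrr.
by rewrite mulrn_eq0 => /eqP.
Qed.

Lemma plus_bell_sigmaEC : sigmaEC (pauliZ C) plus_bell.
Proof. by move=> i j; rewrite !tr_pauliZ_plus_bell. Qed.

Lemma reduced_plus_bell1_offdiag : reduced plus_bell q1 b0 b1 = 0.
Proof.
rewrite reducedE; apply: big1 => s /eqP s1.
rewrite tentry_plus_bell /plus_bell_amp !ffunE /= s1.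
by case: (ord2P (s q2)) => ->; rewrite /= ?mul0r ?mulr0.
Qed.

Lemma reduced_plus_bell0_offdiag : reduced plus_bell q0 b0 b1 != 0.
Proof.
have offdiag x y : reduced plus_bell q0 x y = reduced plus_bell q0 b0 b0.
  have diag x' : reduced plus_bell q0 x' x' = reduced plus_bell q0 b0 b0.
    by case: (ord2P x') => ->; rewrite // -reduced_plus_bell_flip.
  rewrite -(diag x) !reducedE; apply: eq_bigr => s _.
  by rewrite !tentry_plus_bell /plus_bell_amp !ffunE.
apply/eqP => Z; have := tr_reduced plus_bell q0.
case: density_plus_bell => _ _ ->; rewrite /mxtrace big1 => [/eqP|x _].
  by rewrite eq_sym oner_eq0.
by rewrite offdiag -(offdiag b0 b1) Z.
Qed.

Lemma plus_bell_not_RSC : ~ RSC plus_bell.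
Proof.
move=> /(_ q0 q1) /matrixP /(_ b0 b1).
by rewrite reduced_plus_bell1_offdiag; apply/eqP; exact: reduced_plus_bell0_offdiag.
Qed.

End ThreeQubits.

Local Close Scope sesquilinear_scope.

Theorem theorem1 (C : numClosedFieldType) :
  (forall (n m : nat), (2 <= n)%N -> (2 <= m)%N ->
     forall rho : 'M[C]_(tdim m n), density rho ->
       (SSC rho -> RSC rho) /\
       (RSC rho -> forall sigma : 'M[C]_n, sigmaEC sigma rho)) /\
  (exists rho : 'M[C]_(tdim 3 2), density rho /\ RSC rho /\ ~ SSC rho) /\
  (exists rho : 'M[C]_(tdim 3 2),
     density rho /\ sigmaEC (pauliZ C) rho /\ ~ RSC rho).
Proof.
split; [|split].
- by move=> n m _ _ rho _; split; [exact: SSC_RSC | exact: RSC_sigmaEC].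
- exists (mix_state C); split; first exact: density_mix_state.
  by split; [exact: mix_state_RSC | exact: mix_state_not_SSC].
- exists (plus_bell C); split; first exact: density_plus_bell.
  by split; [exact: plus_bell_sigmaEC | exact: plus_bell_not_RSC].
Qed.
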